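(* Let $N$ be the surface described in the context, with $l>0$. The configuration $((0,0),(0,\pi))$ in $N$ (two antipodal points on the circle $\{0\}\times S^1$ where $H_0$ is glued) is insecure; in particular $N$ is not a secure manifold.
   Context: Construction of $N$: let $C=[0,l]\times S^1$ be the flat cylinder of length $l>0$ and radius $1$, with points written $(t,\theta)$, $t\in[0,l]$, $\theta\in\mathbb{R}/2\pi\mathbb{Z}$. Let $H_0$ and $H_l$ be two hemispheres of the round unit sphere, and let $N$ be obtained by gluing the equator of $H_0$ isometrically to $\{0\}\times S^1$ and the equator of $H_l$ isometrically to $\{l\}\times S^1$, so that $N$ is a closed $C^1$ surface with a piecewise smooth Riemannian metric; geodesics of $N$ are the $C^1$ curves that are geodesics in each of the pieces. Conventions: a geodesic has positive finite length and is parametrized by $[0,1]$ proportionally to arclength; $G(x,y)$ is the set of geodesics from $x$ to $y$; a geodesic passes through $z$ if $z=\gamma(t)$ for some $t\in(0,1)$; $(x,y)$ is secure if there is a finite set $B$ such that every geodesic in $G(x,y)$ passes through a point of $B$, insecure otherwise; a manifold is secure if all its configurations are secure. *)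

From Stdlib Require Import Reals List.
Open Scope R_scope.

(* Points of R^3; the surface N is realized as the "capsule" in R^3:
   the flat cylinder C = [0,l] x S^1 embedded as (t,theta) |-> (cos theta, sin theta, t),
   H_0 = lower unit hemisphere centered at (0,0,0) (glued along {0} x S^1),
   H_l = upper unit hemisphere centered at (0,0,l) (glued along {l} x S^1).
   The induced metric on each piece is exactly the flat / round one, and
   the gluings are isometric along the equators. *)
Definition pt := (R * R * R)%type.
Definition px (p : pt) : R := fst (fst p).
Definition py (p : pt) : R := snd (fst p).
Definition pz (p : pt) : R := snd p.

Definition cyl_pt (t theta : R) : pt := (cos theta, sin theta, t).

Inductive piece := PC | PH0 | PHl.

Definition in_piece (l : R) (P : piece) (p : pt) : Prop :=
  match P with
  | PC  => px p ^ 2 + py p ^ 2 = 1 /\ 0 <= pz p <= l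
  | PH0 => px p ^ 2 + py p ^ 2 + pz p ^ 2 = 1 /\ pz p <= 0
  | PHl => px p ^ 2 + py p ^ 2 + (pz p - l) ^ 2 = 1 /\ l <= pz p
  end.

Definition in_N (l : R) (p : pt) : Prop :=
  in_piece l PC p \/ in_piece l PH0 p \/ in_piece l PHl p.

Definition normal (l : R) (P : piece) (p : pt) : pt :=
  match P with
  | PC  => (px p, py p, 0)
  | PH0 => (px p, py p, pz p)
  | PHl => (px p, py p, pz p - l)
  end.

Definition scal (k : R) (p : pt) : pt := (k * px p, k * py p, k * pz p).

Definition curve := R -> pt.

Definition has_deriv (g : curve) (t : R) (v : pt) : Prop :=
  derivable_pt_lim (fun s => px (g s)) t (px v) /\
  derivable_pt_lim (fun s => py (g s)) t (py v) /\
  derivable_pt_lim (fun s => pz (g s)) t (pz v).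

Definition cont_on01 (f : R -> R) : Prop :=
  forall t, 0 <= t <= 1 -> forall eps, 0 < eps -> exists delta, 0 < delta /\
    forall s, 0 <= s <= 1 -> Rabs (s - t) < delta -> Rabs (f s - f t) < eps.

(* A geodesic of N: a C^1 curve on [0,1] (given as the restriction of a map
   R -> R^3; its derivative d on [0,1] is continuous), with values in N,
   parametrized proportionally to arclength with positive length L
   (|gamma'| = L), and which is a geodesic in each piece: on every open
   subinterval of [0,1] on which it stays in one (closed) piece, its
   acceleration exists and is normal to that piece (geodesic equation of an
   embedded surface). *)
Definition is_geodesic (l : R) (g : curve) : Prop :=
  exists (d : curve) (L : R),
    0 < L /\
    (forall t, 0 <= t <= 1 -> in_N l (g t)) /\
    (forall t, 0 <= t <= 1 -> has_deriv g t (d t)) /\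
    cont_on01 (fun s => px (d s)) /\ cont_on01 (fun s => py (d s)) /\
    cont_on01 (fun s => pz (d s)) /\
    (forall t, 0 <= t <= 1 -> px (d t) ^ 2 + py (d t) ^ 2 + pz (d t) ^ 2 = L ^ 2) /\
    (forall (P : piece) (a b : R), 0 <= a -> a < b -> b <= 1 ->
       (forall s, a < s < b -> in_piece l P (g s)) ->
       forall s, a < s < b ->
         exists (acc : pt) (k : R), has_deriv d s acc /\ acc = scal k (normal l P (g s))).

Definition geod_from_to (l : R) (x y : pt) (g : curve) : Prop :=
  is_geodesic l g /\ g 0 = x /\ g 1 = y.

Definition passes_through (g : curve) (z : pt) : Prop :=
  exists t, 0 < t < 1 /\ g t = z.

Definition secure (l : R) (x y : pt) : Prop :=
  exists B : list pt, forall g, geod_from_to l x y g ->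
    exists z, In z B /\ passes_through g z.

Definition insecure (l : R) (x y : pt) : Prop := ~ secure l x y.

Definition secure_manifold (l : R) : Prop :=
  forall x y, in_N l x -> in_N l y -> secure l x y.

From Stdlib Require Import Reals List Lra.
Open Scope R_scope.

(* Proof idea: every half great circle of the lower hemisphere running from a
   point e of the gluing circle {0} x S^1 to its antipode -e is a geodesic of
   N.  Taking e = (1,0,0) = (0,0) and tilting the plane of the half circle by
   a real parameter u gives a one-parameter family of geodesics from (0,0) to
   (0,pi) whose interiors are pairwise disjoint: an interior point z of the
   u-th circle satisfies -y(z)/z(z) = u.  A finite set B can therefore only
   meet finitely many of them, so ((0,0),(0,pi)) is insecure. *)

Definition harmonic (a b w t : R) : R := a * cos (w * t) + b * sin (w * t).

Lemma harmonic_deriv (a b w t : R) :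
  derivable_pt_lim (harmonic a b w) t (harmonic (w * b) ((- w) * a) w t).
Proof.
  assert (Hlin : derivable_pt_lim (mult_real_fct w id) t (w * 1)).
  { apply derivable_pt_lim_scal, derivable_pt_lim_id. }
  assert (Hcos := derivable_pt_lim_scal _ a _ _
                    (derivable_pt_lim_comp _ cos t _ _ Hlin (derivable_pt_lim_cos _))).
  assert (Hsin := derivable_pt_lim_scal _ b _ _
                    (derivable_pt_lim_comp _ sin t _ _ Hlin (derivable_pt_lim_sin _))).
  pose proof (derivable_pt_lim_plus _ _ _ _ _ Hcos Hsin) as Hsum.
  unfold mult_real_fct, comp, id, plus_fct in Hsum.
  unfold harmonic.
  replace (w * b * cos (w * t) + - w * a * sin (w * t))
    with (a * (- sin (w * t) * (w * 1)) + b * (cos (w * t) * (w * 1))) by ring.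
  exact Hsum.
Qed.

Lemma cont_on01_of_continuity (f : R -> R) :
  (forall t, continuity_pt f t) -> cont_on01 f.
Proof.
  intros Hc t _ eps Heps.
  destruct (Hc t eps Heps) as [delta [Hdelta Hclose]].
  exists delta; split; [exact Hdelta|].
  intros s _ Hs.
  destruct (Req_dec s t) as [->|Hne].
  - unfold Rminus; rewrite Rplus_opp_r, Rabs_R0; exact Heps.
  - apply (Hclose s); repeat split; auto.
Qed.

Lemma harmonic_cont_on01 (a b w : R) : cont_on01 (harmonic a b w).
Proof.
  apply cont_on01_of_continuity; intro t.
  apply derivable_continuous_pt; eexists; apply harmonic_deriv.
Qed.

Definition dot (p q : pt) : R := px p * px q + py p * py q + pz p * pz q.

Lemma dot_comm (p q : pt) : dot p q = dot q p.
Proof. unfold dot; ring. Qed.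

Lemma dot_scal (a b : R) (p q : pt) : dot (scal a p) (scal b q) = a * b * dot p q.
Proof. unfold dot, scal, px, py, pz; simpl; ring. Qed.

Definition arc (e v : pt) : curve :=
  fun t => (harmonic (px e) (px v) PI t, harmonic (py e) (py v) PI t,
            harmonic (pz e) (pz v) PI t).

Lemma arc_has_deriv (e v : pt) (t : R) :
  has_deriv (arc e v) t (arc (scal PI v) (scal (- PI) e) t).
Proof. repeat split; apply harmonic_deriv. Qed.

Lemma arc_scal (k : R) (e v : pt) (t : R) :
  arc (scal k e) (scal k v) t = scal k (arc e v t).
Proof. unfold arc, scal, harmonic, px, py, pz; simpl; f_equal; [f_equal|]; ring. Qed.

Lemma arc_dot (e v : pt) (r t : R) :
  dot e e = r -> dot v v = r -> dot e v = 0 -> dot (arc e v t) (arc e v t) = r.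
Proof.
  destruct e as [[e1 e2] e3], v as [[v1 v2] v3].
  unfold dot, arc, harmonic, px, py, pz; simpl; intros He Hv Hev.
  pose proof (sin2_cos2 (PI * t)) as Hpyth; unfold Rsqr in Hpyth.
  transitivity ((cos (PI * t) * cos (PI * t)) * (e1 * e1 + e2 * e2 + e3 * e3)
                + (sin (PI * t) * sin (PI * t)) * (v1 * v1 + v2 * v2 + v3 * v3)
                + 2 * sin (PI * t) * cos (PI * t) * (e1 * v1 + e2 * v2 + e3 * v3)); [ring|].
  rewrite He, Hv, Hev; nra.
Qed.

Lemma arc_start (e v : pt) : arc e v 0 = e.
Proof.
  destruct e as [[x y] z]; unfold arc, harmonic, px, py, pz; simpl.
  rewrite Rmult_0_r, cos_0, sin_0; f_equal; [f_equal|]; ring.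
Qed.

Lemma arc_end (e v : pt) : arc e v 1 = scal (-1) e.
Proof.
  unfold arc, scal, harmonic, px, py, pz; simpl.
  rewrite Rmult_1_r, cos_PI, sin_PI; f_equal; [f_equal|]; ring.
Qed.

Lemma sin_PI_pos (t : R) : 0 < t < 1 -> 0 < sin (PI * t).
Proof. intro Ht; pose proof PI_RGT_0; apply sin_gt_0; nra. Qed.

Lemma sin_PI_nonneg (t : R) : 0 <= t <= 1 -> 0 <= sin (PI * t).
Proof. intro Ht; pose proof PI_RGT_0; apply sin_ge_0; nra. Qed.

Section LowerHalfCircle.

Variables (l : R) (e v : pt).
Hypotheses (hl : 0 < l) (he : dot e e = 1) (hv : dot v v = 1) (hev : dot e v = 0)
           (he_eq : pz e = 0) (hv_down : pz v < 0).

Lemma arc_height (t : R) : pz (arc e v t) = pz v * sin (PI * t).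
Proof.
  change (harmonic (pz e) (pz v) PI t = pz v * sin (PI * t)).
  unfold harmonic; rewrite he_eq; ring.
Qed.

Lemma arc_in_H0 (t : R) : 0 <= t <= 1 -> in_piece l PH0 (arc e v t).
Proof.
  intro Ht; pose proof (arc_dot e v 1 t he hv hev) as Hsph.
  pose proof (sin_PI_nonneg t Ht); unfold in_piece, dot in *; split.
  - lra.
  - rewrite arc_height; nra.
Qed.

(* On an open interval the arc meets only H_0: at an interior point it lies
   strictly below the equator, hence outside the cylinder and H_l. *)
Lemma arc_piece_H0 (P : piece) (a b : R) :
  0 <= a -> a < b -> b <= 1 ->
  (forall s, a < s < b -> in_piece l P (arc e v s)) -> P = PH0.
Proof.
  intros ha hab hb Hin.
  assert (Hmid : 0 < (a + b) / 2 < 1) by lra.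
  pose proof (sin_PI_pos _ Hmid) as Hsin.
  assert (Hbelow : pz (arc e v ((a + b) / 2)) < 0) by (rewrite arc_height; nra).
  destruct P; [| reflexivity |]; exfalso;
    destruct (Hin ((a + b) / 2) ltac:(lra)) as [_ Hz]; lra.
Qed.

Lemma lower_arc_geodesic : geod_from_to l e (scal (-1) e) (arc e v).
Proof.
  split; [| split; [apply arc_start | apply arc_end]].
  exists (arc (scal PI v) (scal (- PI) e)), PI.
  split; [exact PI_RGT_0|].
  split; [intros t Ht; right; left; exact (arc_in_H0 t Ht)|].
  split; [intros t _; apply arc_has_deriv|].
  split; [apply harmonic_cont_on01|].
  split; [apply harmonic_cont_on01|].
  split; [apply harmonic_cont_on01|].
  split.
  - intros t _.
    assert (Hspeed : dot (arc (scal PI v) (scal (- PI) e) t)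
                         (arc (scal PI v) (scal (- PI) e) t) = PI * PI).
    { apply arc_dot; rewrite dot_scal.
      - rewrite hv; ring.
      - rewrite he; ring.
      - rewrite dot_comm, hev; ring. }
    unfold dot in Hspeed; transitivity (PI * PI); [rewrite <- Hspeed | ]; ring.
  - intros P a b ha hab hb Hin s _.
    rewrite (arc_piece_H0 P a b ha hab hb Hin).
    exists (arc (scal PI (scal (- PI) e)) (scal (- PI) (scal PI v)) s), (- (PI * PI)).
    split; [apply arc_has_deriv|].
    replace (scal PI (scal (- PI) e)) with (scal (- (PI * PI)) e)
      by (unfold scal, px, py, pz; simpl; f_equal; [f_equal|]; ring).
    replace (scal (- PI) (scal PI v)) with (scal (- (PI * PI)) v)
      by (unfold scal, px, py, pz; simpl; f_equal; [f_equal|]; ring).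
    apply arc_scal.
Qed.

End LowerHalfCircle.

Lemma list_bounded_above {A : Type} (f : A -> R) (B : list A) :
  exists M, forall z, In z B -> f z < M.
Proof.
  induction B as [|a B [M HM]].
  - exists 0; intros z [].
  - exists (Rmax (f a + 1) M); intros z [<- | Hz].
    + pose proof (Rmax_l (f a + 1) M); lra.
    + pose proof (HM z Hz); pose proof (Rmax_r (f a + 1) M); lra.
Qed.

Lemma insecure_of_separated_family (l : R) (x y : pt) (f : pt -> R) (g : R -> curve) :
  (forall u, geod_from_to l x y (g u)) ->
  (forall u z, passes_through (g u) z -> f z = u) ->
  insecure l x y.
Proof.
  intros Hgeod Hsep [B HB].
  destruct (list_bounded_above f B) as [M HM].
  destruct (HB (g M) (Hgeod M)) as [z [HzB Hpass]].
  pose proof (HM z HzB); rewrite (Hsep M z Hpass) in *; lra.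
Qed.

(* The tilted unit vector (0, u, -1)/sqrt(1+u^2): the second direction of the
   u-th half circle, with slope -y/z = u. *)
Definition tilt (u : R) : pt :=
  (0, u / sqrt (1 + u * u), - (1 / sqrt (1 + u * u))).

Lemma tilt_unit (u : R) : dot (tilt u) (tilt u) = 1.
Proof.
  assert (Hpos : 0 < 1 + u * u) by nra.
  pose proof (sqrt_lt_R0 _ Hpos) as Hroot.
  pose proof (sqrt_sqrt _ (Rlt_le _ _ Hpos)) as Hsq.
  unfold dot, tilt, px, py, pz; simpl.
  transitivity ((1 + u * u) / (sqrt (1 + u * u) * sqrt (1 + u * u))); [field; lra|].
  rewrite Hsq; field; lra.
Qed.

Lemma tilt_down (u : R) : pz (tilt u) < 0.
Proof.
  assert (Hpos : 0 < sqrt (1 + u * u)) by (apply sqrt_lt_R0; nra).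
  unfold tilt, pz; simpl; pose proof (Rinv_0_lt_compat _ Hpos); lra.
Qed.

Definition slope (z : pt) : R := - py z / pz z.

Definition east : pt := (1, 0, 0).

Lemma tilted_arc_slope (u : R) (z : pt) :
  passes_through (arc east (tilt u)) z -> slope z = u.
Proof.
  intros [t [Ht <-]]; pose proof (sin_PI_pos t Ht).
  assert (Hpos : 0 < sqrt (1 + u * u)) by (apply sqrt_lt_R0; nra).
  unfold slope, arc, east, tilt, harmonic, py, pz; simpl; field; lra.
Qed.

Lemma cyl_pt_in_N (l theta : R) : 0 < l -> in_N l (cyl_pt 0 theta).
Proof.
  intro hl; left; unfold in_piece, cyl_pt, px, py, pz; simpl.
  pose proof (sin2_cos2 theta); unfold Rsqr in *; split; lra.
Qed.

Theorem mainTheorem7 (l : R) (hl : 0 < l) :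
  insecure l (cyl_pt 0 0) (cyl_pt 0 PI) /\ ~ secure_manifold l.
Proof.
  assert (Hstart : cyl_pt 0 0 = east)
    by (unfold cyl_pt, east; rewrite cos_0, sin_0; reflexivity).
  assert (Hend : cyl_pt 0 PI = scal (-1) east)
    by (unfold cyl_pt, east, scal, px, py, pz; simpl; rewrite cos_PI, sin_PI;
        f_equal; [f_equal|]; ring).
  assert (Hins : insecure l (cyl_pt 0 0) (cyl_pt 0 PI)).
  { rewrite Hstart, Hend.
    apply (insecure_of_separated_family l _ _ slope (fun u => arc east (tilt u))).
    - intro u; apply lower_arc_geodesic; auto using tilt_unit, tilt_down;
        unfold dot, east, tilt, px, py, pz; simpl; ring.
    - apply tilted_arc_slope. }
  split; [exact Hins|].
  intro Hsecure; apply Hins, Hsecure; apply cyl_pt_in_N, hl.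
Qed.
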